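(* Let $\mathbb M^{n+1}$ be Minkowski space with form $\langle-,-\rangle$ of signature $-+\dots+$, let $c>0$, and let $\mathcal K^c=\{x\in\mathbb M^{n+1}:\langle x,x\rangle=-c^2,\ x \text{ future-oriented}\}$ with the Riemannian metric induced by $\langle-,-\rangle$ (a hyperbolic space of curvature $-1/c^2$), so that $T_p\mathcal K^c=p^\perp$ with the inner product $\langle-,-\rangle|_{p^\perp}$. Fix $p\in\mathcal K^c$. For $w\in T_p\mathcal K^c$ put $v(w):=c\tanh(|w|/c)\,\frac{w}{|w|}$ ($v(0)=0$); this is a bijection from $T_p\mathcal K^c$ onto the open ball $\mathcal V_p=\{u\in p^\perp:\langle u,u\rangle<c^2\}$. For $w_1,w_2\in T_p\mathcal K^c$, let $q:=\exp_p w_1$, let $w_2'\in T_q\mathcal K^c$ be the parallel transport of $w_2$ along the geodesic segment from $p$ to $q$, let $r:=\exp_q w_2'$, and define $w_1\oplus w_2:=\exp_p^{-1}r$. For $v_1,v_2\in\mathcal V_p$ with $v_i=v(w_i)$ define $v_1\oplus v_2:=v(w_1\oplus w_2)$. Then $v_1\oplus v_2$ equals the Einstein relativistic velocity sum $$v_1\oplus v_2=\frac{1}{1+\frac{\langle v_1,v_2\rangle}{c^2}}\left(v_1+\frac{v_2}{\gamma_{v_1}}+\frac{1}{c^2}\,\frac{\gamma_{v_1}}{1+\gamma_{v_1}}\langle v_1,v_2\rangle\, v_1\right),\qquad \gamma_{v_1}=\Big(1-\frac{\langle v_1,v_1\rangle}{c^2}\Big)^{-1/2}.$$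
   Context: $\exp$ denotes the Riemannian exponential map of $\mathcal K^c$ and $|w|=\sqrt{\langle w,w\rangle}$ for $w\in p^\perp$. The velocity $v(w)$ is the relative velocity (as measured by $p$) of the inertial observer $\exp_p w$; the Einstein sum $v_1\oplus v_2$ is the velocity, relative to $p$, of an object moving with velocity $v_2$ relative to a frame that moves with velocity $v_1$ relative to $p$ (frames related by a pure boost). *)

From HB Require Import structures.
From mathcomp Require Import all_boot all_order all_algebra.
From mathcomp Require Import all_classical all_reals all_analysis.
Set Implicit Arguments. Unset Strict Implicit. Unset Printing Implicit Defensive.
Import Order.TTheory GRing.Theory Num.Theory.
Import numFieldNormedType.Exports.
Local Open Scope ring_scope.

Section Minkowski.
Variables (R : realType) (n : nat).

(* Minkowski space M^{n+1}: row vectors with n+1 coordinates, coordinate 0 = time. *)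
Definition vec := 'rV[R]_(n.+1).

Definition mink (x y : vec) : R :=
  \sum_(i < n.+1) (if i == ord0 then -1 else 1) * (x ord0 i * y ord0 i).

Definition onK (c : R) (x : vec) : Prop := mink x x = - c ^+ 2 /\ 0 < x ord0 ord0.

Definition mnorm (w : vec) : R := Num.sqrt (mink w w).

(* geodesic of K^c (w.r.t. induced metric): a C^2 curve in K^c whose ambient
   acceleration is normal to K^c, i.e. proportional to the position vector
   (T_x K^c = x^perp, normal line = span x). *)
Definition geodesic (c : R) (g : R -> vec) : Prop :=
  forall t : R, onK c (g t) /\ derivable g t 1 /\ derivable ('D_1 g) t 1 /\
    exists k : R, 'D_1 ('D_1 g) t = k *: g t.

(* parallel vector field along a curve g in K^c (Levi-Civita connection of the
   induced metric): tangent at each point, ambient derivative normal. *)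
Definition parallel_along (g : R -> vec) (V : R -> vec) : Prop :=
  forall t : R, mink (g t) (V t) = 0 /\ derivable V t 1 /\
    exists k : R, 'D_1 V t = k *: g t.

Definition expRel (c : R) (p w q : vec) : Prop :=
  exists g : R -> vec, geodesic c g /\ g 0 = p /\ 'D_1 g 0 = w /\ g 1 = q.

Definition transportRel (c : R) (p w1 w2 w2' : vec) : Prop :=
  exists (g : R -> vec) (V : R -> vec), geodesic c g /\ g 0 = p /\ 'D_1 g 0 = w1 /\
    parallel_along g V /\ V 0 = w2 /\ V 1 = w2'.

Definition tanhR (x : R) : R := (expR x - expR (- x)) / (expR x + expR (- x)).

Definition vel (c : R) (w : vec) : vec :=
  if w == 0 then 0 else (c * tanhR (mnorm w / c) / mnorm w) *: w.

Definition lorentz_gamma (c : R) (v : vec) : R :=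
  (Num.sqrt (1 - mink v v / c ^+ 2))^-1.

Definition einstein_add (c : R) (v1 v2 : vec) : vec :=
  (1 + mink v1 v2 / c ^+ 2)^-1 *:
    (v1 + (lorentz_gamma c v1)^-1 *: v2 +
     ((c ^+ 2)^-1 * (lorentz_gamma c v1 / (1 + lorentz_gamma c v1)) * mink v1 v2) *: v1).

End Minkowski.

(* The geodesics of K^c are the curves [t |-> cosh (b t) p + (sinh (b t) / b) w] with
   [b = |w| / c]: along a geodesic [g] the Gauss formula gives [g'' = (<g', g'> / c^2) g] with
   [<g', g'>] constant, so every coordinate solves [u'' = b^2 u].  The same formula gives
   [V' = (<g', V> / c^2) g] for a parallel field [V], with [<g', V> = <w1, w2>] constant, so
   parallel transport is explicit too, and [r = exp_q w2'] is an explicit combination of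
   [p], [w1], [w2].  Finally [r = gamma (p + v(w3))] with [gamma = - <p, r> / c^2], and
   [gamma_(v(w)) = cosh (|w| / c)], so the comparison with the Einstein sum is a field identity. *)

From HB Require Import structures.
From mathcomp Require Import all_boot all_order all_algebra.
From mathcomp Require Import all_classical all_reals all_analysis.
From mathcomp Require Import ring lra.
Import Order.TTheory GRing.Theory Num.Theory.
Import numFieldNormedType.Exports.
Local Open Scope ring_scope.

Section Calculus.
Context {R : realType}.

Global Instance is_deriveZl {V : normedModType R} {f : R -> R} (v : V) {t df : R} :
  is_derive t 1 f df -> is_derive t 1 (fun s => f s *: v) (df *: v).
Proof.
move=> fdf; have dft : differentiable f t by apply/derivable1_diffP; exact: ex_derive.
apply: DeriveDef; first exact/derivable1_diffP/differentiableZl.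
rewrite deriveE ?diffZl //=; last exact: differentiableZl.
by rewrite -(@derive_val _ _ _ _ _ _ _ fdf) deriveE.
Qed.

Lemma is_derive_cst0 {V W : normedModType R} (f : V -> W) {a : W} {x v : V} {df : W} :
  (forall y, f y = a) -> is_derive x v f df -> df = 0.
Proof.
move=> fa; have -> : f = cst a by apply/funext.
by move=> fdf; rewrite -(@derive_val _ _ _ _ _ _ _ fdf) derive_cst.
Qed.

Lemma is_derive_coord {m1 m2 : nat} {f : R -> 'M[R]_(m1, m2)} {t : R} i j :
  derivable f t 1 -> is_derive t 1 (fun s => f s i j) ('D_1 f t i j).
Proof.
move=> df; rewrite derive_mx // mxE; apply: derivableP.
exact: (derivable_mxP f t 1).1 df i j.
Qed.

Lemma is_derive0_cst {m1 m2 : nat} {f : R -> 'M[R]_(m1, m2)} (x y : R) :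
  (forall t : R, is_derive t 1 f 0) -> f x = f y.
Proof.
move=> f'0; apply/matrixP => i j; apply: (@is_derive_0_is_cst _ (fun s => f s i j)) => t.
by have := is_derive_coord i j (f'0 t).(ex_derive); rewrite derive_val mxE.
Qed.

Lemma hyperbolic_ode_eq0 {b : R} {u u' : R -> R} :
  (forall t : R, is_derive t 1 u (u' t)) ->
  (forall t : R, is_derive t 1 u' (b ^+ 2 * u t)) ->
  u 0 = 0 -> u' 0 = 0 -> forall t, u t = 0.
Proof.
move=> Hu Hu' u0 u'0.
have first_integral t : expR (b * t) * (u' t - b * u t) = 0.
  have D (s : R) : is_derive s 1 (fun s => expR (b * s) * (u' s - b * u s)) 0.
    by apply: is_derive_eq; rewrite /GRing.scale /=; ring.
  by rewrite (is_derive_0_is_cst _ 0 D) /= u0 u'0 mulr0 subrr mulr0.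
have u'E t : u' t = b * u t.
  by apply/eqP; rewrite -subr_eq0; have /eqP := first_integral t; rewrite mulf_eq0 gt_eqF ?expR_gt0.
move=> t; have D (s : R) : is_derive s 1 (fun s => expR (- b * s) * u s) 0.
  by apply: is_derive_eq; rewrite u'E /GRing.scale /=; ring.
have /eqP := is_derive_0_is_cst t 0 D; rewrite /= u0 mulr0 mulf_eq0 gt_eqF ?expR_gt0 //=.
by move/eqP.
Qed.

Lemma hyperbolic_ode_mx_eq0 {m1 m2 : nat} {b : R} {u u' : R -> 'M[R]_(m1, m2)} :
  (forall t : R, is_derive t 1 u (u' t)) ->
  (forall t : R, is_derive t 1 u' (b ^+ 2 *: u t)) ->
  u 0 = 0 -> u' 0 = 0 -> forall t, u t = 0.
Proof.
move=> Hu Hu' u0 u'0 t; apply/matrixP => i j; rewrite mxE.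
apply: (@hyperbolic_ode_eq0 b (fun s => u s i j) (fun s => u' s i j)) => [s|s||].
- by have := is_derive_coord i j (Hu s).(ex_derive); rewrite derive_val.
- by have := is_derive_coord i j (Hu' s).(ex_derive); rewrite derive_val mxE.
- by rewrite u0 mxE.
- by rewrite u'0 mxE.
Qed.

End Calculus.

Section Hyperbolic.
Context {R : realType}.
Implicit Types b t : R.

Definition hcos b t : R := (expR (b * t) + expR (- (b * t))) / 2.
Definition hsin b t : R :=
  if b == 0 then t else (expR (b * t) - expR (- (b * t))) / (2 * b).
Definition hvers b t : R := if b == 0 then t ^+ 2 / 2 else (hcos b t - 1) / b ^+ 2.

Global Instance is_derive_hcos b t : is_derive t 1 (hcos b) (b ^+ 2 * hsin b t).
Proof.
rewrite /hcos; apply: is_derive_eq; rewrite /hsin /GRing.scale /=.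
by case: eqP => [->|/eqP b0]; field.
Qed.

Global Instance is_derive_hsin b t : is_derive t 1 (hsin b) (hcos b t).
Proof.
rewrite /hsin /hcos; case: eqP => [->|/eqP b0]; apply: is_derive_eq;
  rewrite /GRing.scale /=; last by field.
by rewrite mul0r oppr0 expR0; field.
Qed.

Global Instance is_derive_hvers b t : is_derive t 1 (hvers b) (hsin b t).
Proof.
rewrite /hvers; case: eqP => [->|/eqP b0]; apply: is_derive_eq;
  by rewrite /hsin ?eqxx ?(negPf b0) /GRing.scale /=; field.
Qed.

Lemma hcos0 b : hcos b 0 = 1.
Proof. by rewrite /hcos mulr0 oppr0 expR0; field. Qed.

Lemma hsin0 b : hsin b 0 = 0.
Proof. by rewrite /hsin mulr0 oppr0 subrr mul0r if_same. Qed.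

Lemma hvers0 b : hvers b 0 = 0.
Proof. by rewrite /hvers hcos0 subrr expr0n /= !mul0r if_same. Qed.

Lemma hcos_gt0 b t : 0 < hcos b t.
Proof. by rewrite divr_gt0 // addr_gt0 // expR_gt0. Qed.

Lemma hcos2B_hsin2 b t : hcos b t ^+ 2 - b ^+ 2 * hsin b t ^+ 2 = 1.
Proof.
rewrite /hcos /hsin expRN; case: eqP => [->|/eqP b0].
  by rewrite mul0r expR0; field.
by field; rewrite b0 gt_eqF ?expR_gt0.
Qed.

Lemma sqrM_hvers b t : b ^+ 2 * hvers b t = hcos b t - 1.
Proof.
rewrite /hvers; case: eqP => [->|/eqP b0]; last by field.
by rewrite /hcos !mul0r oppr0 expR0; field.
Qed.

Lemma hvers_hsin b t : hvers b t = hsin b t ^+ 2 / (1 + hcos b t).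
Proof.
have hcos1 : 1 + hcos b t != 0 by rewrite gt_eqF // addr_gt0 ?hcos_gt0.
apply: (mulIf hcos1); rewrite mulfVK //.
case: (eqVneq b 0) => [b0|b0].
  by rewrite /hvers /hsin /hcos b0 eqxx mul0r oppr0 expR0; field.
apply: (mulfI (expf_neq0 2 b0)); rewrite mulrA sqrM_hvers.
by have := hcos2B_hsin2 b t; lra.
Qed.
End Hyperbolic.

Section MinkowskiForm.
Context {R : realType} {n : nat}.
Local Notation vec := (vec R n).
Implicit Types x y z : vec.

Lemma minkC x y : mink x y = mink y x.
Proof. by apply: eq_bigr => i _; rewrite (mulrC (x _ _)). Qed.

Lemma minkDl x y z : mink (x + y) z = mink x z + mink y z.
Proof. by rewrite /mink -big_split /=; apply: eq_bigr => i _; rewrite !mxE; ring. Qed.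

Lemma minkZl (a : R) x z : mink (a *: x) z = a * mink x z.
Proof. by rewrite /mink mulr_sumr; apply: eq_bigr => i _; rewrite !mxE; ring. Qed.

Lemma minkDr x y z : mink z (x + y) = mink z x + mink z y.
Proof. by rewrite minkC minkDl !(minkC z). Qed.

Lemma minkZr (a : R) x z : mink z (a *: x) = a * mink z x.
Proof. by rewrite minkC minkZl minkC. Qed.

Lemma mink0l z : mink 0 z = 0.
Proof. by rewrite -(scale0r 0) minkZl mul0r. Qed.

Lemma mink0r z : mink z 0 = 0.
Proof. by rewrite minkC mink0l. Qed.

Lemma is_derive_mink {f g : R -> vec} {t : R} :
  derivable f t 1 -> derivable g t 1 ->
  is_derive t 1 (fun s => mink (f s) (g s)) (mink ('D_1 f t) (g t) + mink (f t) ('D_1 g t)).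
Proof.
move=> df dg; rewrite /mink -big_split /=.
have -> : (fun s => mink (f s) (g s)) =
    \sum_(i < n.+1) (fun s => (if i == ord0 then -1 else 1) * (f s ord0 i * g s ord0 i)).
  by apply/funext => s; rewrite fct_sumE.
apply: is_derive_sum => i.
have := is_derive_coord ord0 i df; have := is_derive_coord ord0 i dg => dgi dfi.
by apply: is_derive_eq; rewrite /GRing.scale /=; ring.
Qed.

Definition sdot x y : R := \sum_(i < n) x ord0 (lift ord0 i) * y ord0 (lift ord0 i).

Lemma mink_sdot x y : mink x y = sdot x y - x ord0 ord0 * y ord0 ord0.
Proof.
rewrite /mink big_ord_recl eqxx mulN1r addrC; congr (_ - _).
by apply: eq_bigr => i _; rewrite eq_sym (negPf (neq_lift _ _)) mul1r.
Qed.

Lemma sdot_AMGM x y (a l : R) : 0 < l ->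
  2 * a * sdot x y <= l * a ^+ 2 * sdot x x + sdot y y / l.
Proof.
move=> l0; rewrite /sdot !mulr_sumr mulr_suml -big_split /=.
apply: ler_sum => i _; set u := x ord0 _; set v := y ord0 _.
rewrite -subr_ge0 (_ : _ - _ = (l * a * u - v) ^+ 2 / l); last by field; rewrite gt_eqF.
by rewrite divr_ge0 ?sqr_ge0 ?ltW.
Qed.

End MinkowskiForm.

Section Hyperboloid.
Context {R : realType} {n : nat}.
Local Notation vec := (vec R n).
Variable c : R.
Hypothesis c_gt0 : 0 < c.
Implicit Types (p q r w x : vec) (b t : R) (g X Y : R -> vec).

Lemma tangent_time_sqr {p w} : onK c p -> mink p w = 0 ->
  c ^+ 2 * w ord0 ord0 ^+ 2 <= p ord0 ord0 ^+ 2 * mink w w.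
Proof.
move=> [pp p0] pw; move: pp pw; rewrite !mink_sdot => pp pw.
have ip0 : 0 < (p ord0 ord0)^-1 by rewrite invr_gt0.
have := sdot_AMGM p w (w ord0 ord0) _ ip0.
rewrite invrK (_ : sdot p w = p ord0 ord0 * w ord0 ord0); last by lra.
rewrite (_ : sdot p p = p ord0 ord0 ^+ 2 - c ^+ 2); last by rewrite expr2; lra.
set P := p ord0 ord0; set W := w ord0 ord0 => amgm.
rewrite -subr_ge0 (_ : _ - _ = P * ((P^-1 * W ^+ 2 * (P ^+ 2 - c ^+ 2) + sdot w w * P)
    - 2 * W * (P * W))); last by field; rewrite gt_eqF.
by rewrite mulr_ge0 ?subr_ge0 // ltW.
Qed.

Lemma mink_tangent_ge0 {p w} : onK c p -> mink p w = 0 -> 0 <= mink w w.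
Proof.
move=> pK pw; have := tangent_time_sqr pK pw.
rewrite -(pmulr_rge0 _ (exprn_gt0 2 pK.2)); apply: le_trans.
by rewrite mulr_ge0 ?sqr_ge0.
Qed.

Lemma mink_tangent_eq0 {p w} : onK c p -> mink p w = 0 -> mink w w = 0 -> w = 0.
Proof.
move=> pK pw ww0; have := tangent_time_sqr pK pw; rewrite ww0 mulr0 => cw0.
have /eqP : c ^+ 2 * w ord0 ord0 ^+ 2 = 0 by apply/eqP; rewrite eq_le cw0 mulr_ge0 ?sqr_ge0.
rewrite mulf_eq0 !expf_eq0 /= gt_eqF //= => /eqP w0.
move/eqP: ww0; rewrite mink_sdot w0 mul0r subr0 psumr_eq0; last first.
  by move=> i _; rewrite -expr2 sqr_ge0.
move=> /allP wi0; apply/matrixP => i j; rewrite mxE (ord1 i).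
case: (unliftP ord0 j) => [k ->|-> //].
by apply/eqP; rewrite -sqrf_eq0 expr2; exact: wi0 (mem_index_enum _).
Qed.

Lemma mink_onK_lt0 {x y} : onK c x -> onK c y -> mink x y < 0.
Proof.
move=> [xx x0] [yy y0]; move: xx yy; rewrite !mink_sdot => xx yy.
have := sdot_AMGM x y 1 _ (divr_gt0 y0 x0).
rewrite (_ : sdot x x = x ord0 ord0 ^+ 2 - c ^+ 2); last by rewrite expr2; lra.
rewrite (_ : sdot y y = y ord0 ord0 ^+ 2 - c ^+ 2); last by rewrite expr2; lra.
set X := x ord0 ord0; set Y := y ord0 ord0.
rewrite (_ : _ + _ = 2 * (X * Y) - c ^+ 2 * (Y / X + X / Y)); last by field; rewrite !gt_eqF.
have : 0 < c ^+ 2 * (Y / X + X / Y) by rewrite mulr_gt0 ?exprn_gt0 ?addr_gt0 ?divr_gt0.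
lra.
Qed.

Definition rapidity w : R := mnorm w / c.

Lemma mink_rapidity {p w} : onK c p -> mink p w = 0 -> mink w w = rapidity w ^+ 2 * c ^+ 2.
Proof.
move=> pK pw; rewrite /rapidity /mnorm expr_div_n sqr_sqrtr ?(mink_tangent_ge0 pK pw) //.
by field; rewrite gt_eqF.
Qed.

Definition hgeo (b : R) p w t : vec := hcos b t *: p + hsin b t *: w.

Global Instance is_derive_hgeo b p w t :
  is_derive t 1 (hgeo b p w) (hsin b t *: (b ^+ 2 *: p) + hcos b t *: w).
Proof. by apply: is_derive_eq; rewrite scalerA mulrC. Qed.

Lemma derive_hgeo b p w :
  'D_1 (hgeo b p w) = fun t => hsin b t *: (b ^+ 2 *: p) + hcos b t *: w.
Proof. by apply/funext => t; rewrite derive_val. Qed.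

Global Instance is_derive2_hgeo b p w t :
  is_derive t 1 ('D_1 (hgeo b p w)) (b ^+ 2 *: hgeo b p w t).
Proof.
rewrite derive_hgeo; apply: is_derive_eq.
by rewrite /hgeo scalerDr !scalerA [_ * b ^+ 2]mulrC -scalerA.
Qed.

Lemma hgeo0 b p w : hgeo b p w 0 = p.
Proof. by rewrite /hgeo hcos0 hsin0 scale1r scale0r addr0. Qed.

Lemma derive_hgeo0 b p w : 'D_1 (hgeo b p w) 0 = w.
Proof. by rewrite derive_val hcos0 hsin0 scale1r scale0r add0r. Qed.

Lemma hgeo_onK {p w} t : onK c p -> mink p w = 0 -> onK c (hgeo (rapidity w) p w t).
Proof.
move=> pK pw; have ww := mink_rapidity pK pw; set b := rapidity w in ww *.
have CS := hcos2B_hsin2 b t; have C0 := hcos_gt0 b t.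
split.
  rewrite /hgeo !(minkDl, minkDr, minkZl, minkZr) pK.1 pw (minkC w p) pw ww.
  by rewrite -[RHS]mulr1 -[in RHS]CS; ring.
have := tangent_time_sqr pK pw; rewrite ww /hgeo !mxE; have P0 := pK.2.
set C := hcos b t in CS C0 *; set S := hsin b t in CS *.
set P := p ord0 ord0 in P0 *; set W := w ord0 ord0 => cW.
have W2 : W ^+ 2 <= P ^+ 2 * b ^+ 2.
  rewrite -(ler_pM2l (exprn_gt0 2 c_gt0)).
  by rewrite (_ : c ^+ 2 * (P ^+ 2 * b ^+ 2) = P ^+ 2 * (b ^+ 2 * c ^+ 2)) //; ring.
have SW : (S * W) ^+ 2 < (C * P) ^+ 2.
  have : S ^+ 2 * W ^+ 2 <= S ^+ 2 * (P ^+ 2 * b ^+ 2) by rewrite ler_wpM2l ?sqr_ge0.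
  have bS : b ^+ 2 * S ^+ 2 = C ^+ 2 - 1 by rewrite -CS; ring.
  rewrite (_ : S ^+ 2 * (P ^+ 2 * b ^+ 2) = P ^+ 2 * (b ^+ 2 * S ^+ 2)); last by ring.
  by rewrite bS !exprMn; have := exprn_gt0 2 P0; nra.
have CP : 0 < C * P by rewrite mulr_gt0.
move: SW CP; rewrite /GRing.scale /=; set x := S * W; set y := C * P; nra.
Qed.

Lemma hgeo_geodesic {p w} : onK c p -> mink p w = 0 -> geodesic c (hgeo (rapidity w) p w).
Proof.
move=> pK pw t; split; first exact: hgeo_onK.
split; first exact: (is_derive_hgeo _ _ _ t).(ex_derive).
split; first exact: (is_derive2_hgeo _ _ _ t).(ex_derive).
by exists (rapidity w ^+ 2); rewrite derive_val.
Qed.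

Lemma geodesic_parallel {g} : geodesic c g -> parallel_along g ('D_1 g).
Proof.
move=> gG t; have [_ [dg [ddg [k g''t]]]] := gG t.
split; last by split=> //; exists k.
have := is_derive_cst0 _ (fun s => (gG s).1.1) (is_derive_mink dg dg).
by rewrite minkC => /eqP; rewrite -mulr2n mulrn_eq0 => /eqP.
Qed.

Lemma parallel_along_mink_cst {g X Y} s t : parallel_along g X -> parallel_along g Y ->
  mink (X s) (Y s) = mink (X t) (Y t).
Proof.
move=> gX gY; apply: (@is_derive_0_is_cst _ (fun u => mink (X u) (Y u))) => u.
have [gXu [dX [k X'u]]] := gX u; have [gYu [dY [l Y'u]]] := gY u.
apply: is_derive_eq (is_derive_mink dX dY) _.
by rewrite X'u Y'u minkZl minkZr gYu minkC gXu !mulr0 addr0.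
Qed.

Lemma parallel_along_derive {g X t} : onK c (g t) -> derivable g t 1 ->
  parallel_along g X -> 'D_1 X t = (mink ('D_1 g t) (X t) / c ^+ 2) *: g t.
Proof.
move=> gt dg gX; have [_ [dX [k X't]]] := gX t.
have := is_derive_cst0 _ (fun s => (gX s).1) (is_derive_mink dg dX).
rewrite X't minkZr gt.1 => /eqP; rewrite addr_eq0 => /eqP ->.
by congr (_ *: _); field; rewrite gt_eqF.
Qed.

Lemma geodesic_uniq {p w g} : onK c p -> mink p w = 0 -> geodesic c g ->
  g 0 = p -> 'D_1 g 0 = w -> g = hgeo (rapidity w) p w.
Proof.
move=> pK pw gG g0 g'0; set b := rapidity w.
have g'g := geodesic_parallel gG.
have g'' t : 'D_1 ('D_1 g) t = b ^+ 2 *: g t.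
  rewrite (parallel_along_derive (gG t).1 (gG t).2.1 g'g).
  rewrite (parallel_along_mink_cst t 0 g'g g'g) g'0 (mink_rapidity pK pw).
  by rewrite mulfK // expf_neq0 // gt_eqF.
apply/funext => t; apply/subr0_eq.
have du (s : R) : is_derive s 1 (g - hgeo b p w) (('D_1 g - 'D_1 (hgeo b p w)) s).
  apply: is_deriveB (derivableP (gG s).2.1) _.
  by rewrite derive_val; exact: is_derive_hgeo.
have du' (s : R) : is_derive s 1 ('D_1 g - 'D_1 (hgeo b p w)) (b ^+ 2 *: (g - hgeo b p w) s).
  apply: is_derive_eq (is_deriveB (derivableP (gG s).2.2.1) (is_derive2_hgeo b p w s)) _.
  by rewrite g'' scalerBr.
apply: (hyperbolic_ode_mx_eq0 du du'); rewrite !fctE; first by rewrite g0 hgeo0 subrr.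
by rewrite g'0 derive_hgeo0 subrr.
Qed.

Definition expK p w : vec := hgeo (rapidity w) p w 1.

Lemma expRelP {p w q} : onK c p -> mink p w = 0 -> expRel c p w q <-> q = expK p w.
Proof.
move=> pK pw; split=> [[g [gG [g0 [g'0 <-]]]]|->].
  by rewrite (geodesic_uniq pK pw gG g0 g'0).
exists (hgeo (rapidity w) p w); split; first exact: hgeo_geodesic.
by rewrite hgeo0 derive_hgeo0.
Qed.

(* A parallel field [V] along [g = hgeo (rapidity w1) p w1] satisfies
   [V' = (<g', V> / c^2) g] (parallel_along_derive) with [<g', V> = <w1, w2>] constant;
   [transport p w1 w2] is the primitive with value [w2] at [0]. *)
Definition transport p w1 w2 t : vec :=
  w2 + (mink w1 w2 / c ^+ 2) *: (hsin (rapidity w1) t *: p + hvers (rapidity w1) t *: w1).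

Global Instance is_derive_transport p w1 w2 t :
  is_derive t 1 (transport p w1 w2) ((mink w1 w2 / c ^+ 2) *: hgeo (rapidity w1) p w1 t).
Proof. by apply: is_derive_eq; rewrite add0r. Qed.

Lemma transport0 p w1 w2 : transport p w1 w2 0 = w2.
Proof. by rewrite /transport hsin0 hvers0 !scale0r addr0 scaler0 addr0. Qed.

Lemma transport_parallel {p w1 w2} : onK c p -> mink p w1 = 0 -> mink p w2 = 0 ->
  parallel_along (hgeo (rapidity w1) p w1) (transport p w1 w2).
Proof.
move=> pK pw1 pw2 t; split; last first.
  by split; [exact: ex_derive | exists (mink w1 w2 / c ^+ 2); rewrite derive_val].
have ww := mink_rapidity pK pw1; set b := rapidity w1 in ww *.
rewrite /transport /hgeo !(minkDl, minkDr, minkZl, minkZr) pK.1 pw1 pw2 (minkC w1 p) pw1 ww.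
rewrite -/b (_ : _ + _ = hsin b t * mink w1 w2 * (1 - hcos b t + b ^+ 2 * hvers b t)).
  by rewrite sqrM_hvers subrKA subrr mulr0.
by field; rewrite gt_eqF.
Qed.

Lemma transportRelP {p w1 w2 w2'} : onK c p -> mink p w1 = 0 -> mink p w2 = 0 ->
  transportRel c p w1 w2 w2' <-> w2' = transport p w1 w2 1.
Proof.
move=> pK pw1 pw2; set b := rapidity w1; split=> [|->]; last first.
  exists (hgeo b p w1), (transport p w1 w2); split; first exact: hgeo_geodesic.
  by rewrite hgeo0 derive_hgeo0 transport0; split=> //; split=> //; split=> //; exact: transport_parallel.
move=> [g [V [gG [g0 [g'0 [gV [V0 <-]]]]]]].
rewrite (geodesic_uniq pK pw1 gG g0 g'0) -/b in gV.
have g'g := geodesic_parallel (hgeo_geodesic pK pw1); rewrite -/b in g'g.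
have V' (s : R) : 'D_1 V s = (mink w1 w2 / c ^+ 2) *: hgeo b p w1 s.
  rewrite (parallel_along_derive (hgeo_onK s pK pw1) (hgeo_geodesic pK pw1 s).2.1 gV).
  by rewrite (parallel_along_mink_cst s 0 g'g gV) derive_hgeo0 V0.
have D (s : R) : is_derive s 1 (V - transport p w1 w2) 0.
  apply: is_derive_eq (is_deriveB (derivableP (gV s).2.1) (is_derive_transport p w1 w2 s)) _.
  by rewrite V' subrr.
apply/subr0_eq; have := is_derive0_cst 1 0 D.
by rewrite !fctE V0 transport0 subrr.
Qed.

Lemma expK_onK {p w} : onK c p -> mink p w = 0 -> onK c (expK p w).
Proof. exact: hgeo_onK. Qed.

Lemma transport_tangent {p w1 w2} : onK c p -> mink p w1 = 0 -> mink p w2 = 0 ->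
  mink (expK p w1) (transport p w1 w2 1) = 0.
Proof. by move=> pK pw1 pw2; have [] := transport_parallel pK pw1 pw2 1. Qed.

Lemma rapidity_transport {p w1 w2} : onK c p -> mink p w1 = 0 -> mink p w2 = 0 ->
  rapidity (transport p w1 w2 1) = rapidity w2.
Proof.
move=> pK pw1 pw2; have tp := transport_parallel pK pw1 pw2.
by rewrite /rapidity /mnorm (parallel_along_mink_cst 1 0 tp tp) transport0.
Qed.

Lemma expK0 p : expK p 0 = p.
Proof.
rewrite /expK /hgeo /rapidity /mnorm mink0l sqrtr0 mul0r scaler0 addr0.
by rewrite /hcos mul0r oppr0 expR0 -mulr2n divff // scale1r.
Qed.

Lemma expK_surj {p r} : onK c p -> onK c r -> exists2 w, mink p w = 0 & expK p w = r.
Proof.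
move=> pK rK; have c2_gt0 := exprn_gt0 2 c_gt0.
set C := - mink p r / c ^+ 2; set x := r - C *: p.
have C_gt0 : 0 < C by rewrite divr_gt0 // oppr_gt0 mink_onK_lt0.
have px : mink p x = 0.
  by rewrite /x -scaleNr minkDr minkZr pK.1 /C; field; rewrite gt_eqF.
have xx : mink x x = c ^+ 2 * (C ^+ 2 - 1).
  rewrite /x -scaleNr !(minkDl, minkDr, minkZl, minkZr) rK.1 pK.1 (minkC r p).
  by rewrite /C; field; rewrite gt_eqF.
have rE : r = C *: p + x by rewrite addrC subrK.
have C2_ge1 : 0 <= C ^+ 2 - 1 by rewrite -(pmulr_rge0 _ c2_gt0) -xx (mink_tangent_ge0 pK px).
(* The sought [w] is a multiple of the projection [x] of [r] on [p^perp] whose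
   rapidity is [arcosh C = ln (C + sqrt (C^2 - 1))]. *)
set s := Num.sqrt (C ^+ 2 - 1).
have [s0|s_neq0] := eqVneq s 0.
  have C1 : C ^+ 2 - 1 = 0 by apply/eqP; rewrite eq_le C2_ge1 andbT -sqrtr_eq0 -/s s0.
  have x0 : x = 0 by apply: (mink_tangent_eq0 pK px); rewrite xx C1 mulr0.
  have C_eq1 : C = 1.
    by apply/eqP; rewrite -(eqrXn2 (n := 2)) ?expr1n ?ltW // -subr_eq0 C1.
  by exists 0; rewrite ?mink0r // expK0 rE x0 addr0 C_eq1 scale1r.
have s_gt0 : 0 < s by rewrite lt_def s_neq0 sqrtr_ge0.
have ss : s ^+ 2 = C ^+ 2 - 1 by rewrite sqr_sqrtr.
have Cs : (C + s) * (C - s) = 1 by rewrite mulrC -subr_sqr ss; ring.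
have Cs_gt1 : 1 < C + s by nra.
set be := ln (C + s); have be_gt0 : 0 < be by rewrite ln_gt0.
have e_be : expR be = C + s by rewrite lnK // posrE; lra.
have e_nbe : expR (- be) = C - s.
  by rewrite expRN e_be; apply: (mulfI (_ : C + s != 0)); rewrite ?mulfV ?Cs // gt_eqF //; lra.
exists ((be / s) *: x); first by rewrite minkZr px mulr0.
have rap : rapidity ((be / s) *: x) = be.
  rewrite /rapidity /mnorm minkZl minkZr xx -ss (_ : be / s * _ = (be * c) ^+ 2); last first.
    by field; rewrite gt_eqF.
  by rewrite sqrtr_sqr ger0_norm ?mulfK ?gt_eqF // mulr_ge0 // ltW.
rewrite /expK rap /hgeo /hcos /hsin (gt_eqF be_gt0) !mulr1 e_be e_nbe scalerA rE.
rewrite (_ : (C + s + (C - s)) / 2 = C); last by field.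
by rewrite (_ : _ / (2 * be) * (be / s) = 1) ?scale1r //; field; rewrite !gt_eqF.
Qed.

Lemma velE {p w} : onK c p -> mink p w = 0 ->
  vel c w = (hsin (rapidity w) 1 / hcos (rapidity w) 1) *: w.
Proof.
move=> pK pw; rewrite /vel; case: eqP => [->|/eqP w_neq0]; first by rewrite scaler0.
have mw_gt0 : 0 < mnorm w.
  rewrite sqrtr_gt0 lt_def (mink_tangent_ge0 pK pw) andbT.
  by apply: contra w_neq0 => /eqP /(mink_tangent_eq0 pK pw) ->.
congr (_ *: _); rewrite /rapidity /hsin /hcos mulf_eq0 invr_eq0 !gt_eqF //= /tanhR !mulr1.
by field; rewrite !gt_eqF ?addr_gt0 ?expR_gt0.
Qed.

Lemma lorentz_gamma_vel {p w} : onK c p -> mink p w = 0 ->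
  lorentz_gamma c (vel c w) = hcos (rapidity w) 1.
Proof.
move=> pK pw; rewrite /lorentz_gamma (velE pK pw) minkZl minkZr (mink_rapidity pK pw).
have C_gt0 := hcos_gt0 (rapidity w) 1; have CS := hcos2B_hsin2 (rapidity w) 1.
set C := hcos _ _ in C_gt0 CS *; set S := hsin _ _ in CS *.
rewrite (_ : 1 - _ = (C ^+ 2 - rapidity w ^+ 2 * S ^+ 2) / C ^+ 2); last first.
  by field; rewrite !gt_eqF.
by rewrite CS div1r -exprVn sqrtr_sqr ger0_norm ?invrK // invr_ge0 ltW.
Qed.

Lemma vel_expK {p w} : onK c p -> mink p w = 0 ->
  vel c w = (- c ^+ 2 / mink p (expK p w)) *: expK p w - p.
Proof.
move=> pK pw; rewrite (velE pK pw) /expK /hgeo minkDr !minkZr pK.1 pw mulr0 addr0.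
have C_gt0 := hcos_gt0 (rapidity w) 1; set C := hcos _ _ in C_gt0 *.
rewrite (_ : - c ^+ 2 / _ = C^-1); last by field; rewrite !gt_eqF.
by rewrite scalerDr !scalerA mulVf ?gt_eqF // scale1r addrC addKr mulrC.
Qed.

Lemma vel_einstein_add {p w1 w2 w3} : onK c p ->
  mink p w1 = 0 -> mink p w2 = 0 -> mink p w3 = 0 ->
  expK (expK p w1) (transport p w1 w2 1) = expK p w3 ->
  vel c w3 = einstein_add c (vel c w1) (vel c w2).
Proof.
move=> pK pw1 pw2 pw3 r3.
have pr := mink_onK_lt0 pK (expK_onK (expK_onK pK pw1) (transport_tangent pK pw1 pw2)).
rewrite (vel_expK pK pw3) -r3 /einstein_add (lorentz_gamma_vel pK pw1) (velE pK pw1) (velE pK pw2).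
(* [hvers_hsin] yields the [gamma / (1 + gamma)] term of the Einstein sum. *)
rewrite /expK /hgeo (rapidity_transport pK pw1 pw2) /transport hvers_hsin in pr *.
rewrite !(minkDr, minkZl, minkZr) pK.1 pw1 pw2 in pr *.
have C1_gt0 := hcos_gt0 (rapidity w1) 1; have C2_gt0 := hcos_gt0 (rapidity w2) 1.
set C1 := hcos _ 1 in C1_gt0 pr *; set C2 := hcos _ 1 in C2_gt0 pr *.
set S1 := hsin _ 1 in pr *; set S2 := hsin _ 1 in pr *; set m := mink w1 w2 in pr *.
clearbody C1 C2 S1 S2 m; rewrite !(mulr0, addr0, add0r) in pr *.
have D_gt0 : 0 < C1 * C2 * c ^+ 2 + S1 * (S2 * m).
  move: pr; rewrite (_ : C2 * _ + _ = - (C1 * C2 * c ^+ 2 + S1 * (S2 * m))) ?oppr_lt0 //.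
  by field; rewrite gt_eqF.
apply/matrixP => i j; rewrite !mxE; field.
rewrite (_ : C2 * _ * _ + _ = - c ^+ 2 * (C1 * C2 * c ^+ 2 + S1 * (S2 * m))); last by ring.
rewrite !(lt0r_neq0 c_gt0, lt0r_neq0 C1_gt0, lt0r_neq0 C2_gt0, lt0r_neq0 D_gt0).
by rewrite lt0r_neq0 ?addr_gt0 // mulf_neq0 ?oppr_eq0 ?expf_neq0 ?lt0r_neq0.
Qed.

End Hyperboloid.

Theorem mainTheorem4 (R : realType) (n : nat) (c : R) (hc : 0 < c)
    (p : vec R n) (hp : onK c p) (w1 w2 : vec R n)
    (hw1 : mink p w1 = 0) (hw2 : mink p w2 = 0) :
  (exists q w2' r w3 : vec R n,
      expRel c p w1 q /\ transportRel c p w1 w2 w2' /\ expRel c q w2' r /\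
      mink p w3 = 0 /\ expRel c p w3 r) /\
  (forall q w2' r w3 : vec R n,
      expRel c p w1 q -> transportRel c p w1 w2 w2' -> expRel c q w2' r ->
      mink p w3 = 0 -> expRel c p w3 r ->
      vel c w3 = einstein_add c (vel c w1) (vel c w2)).
Proof.
have qK := expK_onK _ hc hp hw1; have qw := transport_tangent _ hc hp hw1 hw2.
split.
  have [w3 pw3 r3] := expK_surj _ hc hp (expK_onK _ hc qK qw).
  exists (expK c p w1), (transport c p w1 w2 1), (expK c (expK c p w1) (transport c p w1 w2 1)), w3.
  split; first exact/(expRelP _ hc hp hw1).
  split; first exact/(transportRelP _ hc hp hw1 hw2).
  split; first exact/(expRelP _ hc qK qw).
  by split=> //; apply/(expRelP _ hc hp pw3).
move=> q w2' r w3 /(expRelP _ hc hp hw1) -> /(transportRelP _ hc hp hw1 hw2) ->.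
move=> /(expRelP _ hc qK qw) -> pw3 /(expRelP _ hc hp pw3) r3.
exact (vel_einstein_add _ hc hp hw1 hw2 pw3 r3).
Qed.
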